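(* Let $M$ be an end-decisive MM-QFA that accepts $L$ with bounded error, and let $M'$ be an end-decisive MM-QFA that accepts $L'$ with bounded positive one-sided error. Then there exists an MM-QFA $M''$ that accepts $L\cap L'$ with bounded error.
   Context: A measure-many quantum finite automaton (MM-QFA) over $\Sigma$ is a tuple $(Q,\Sigma,\{U_\sigma\}_{\sigma\in\Sigma\cup\{\$\}},q_0,Q_{acc},Q_{rej})$ with $Q$ finite indexing an orthonormal basis of $\mathbb{C}^Q$, end-marker $\$\notin\Sigma$, unitary $U_\sigma$, initial state $q_0$, and $Q$ partitioned into $Q_{acc},Q_{rej},Q_{non}$ with orthogonal projections $P_{acc},P_{rej},P_{non}$. On input $x$ it processes $x\$$ maintaining $(\psi,p_{acc},p_{rej})$, initially $(|q_0\rangle,0,0)$; on reading $\sigma$: $\psi'=U_\sigma\psi$, $p_{acc}\mathrel{+}=\|P_{acc}\psi'\|^2$, $p_{rej}\mathrel{+}=\|P_{rej}\psi'\|^2$, $\psi\leftarrow P_{non}\psi'$; the acceptance probability $p(x)$ is the final $p_{acc}$. It is end-decisive if $P_{acc}\psi'=0$ after reading every non-end-marker symbol, on every input. It accepts $K$ with bounded error if for some $\lambda$ and $\epsilon>0$, $p(x)>\lambda+\epsilon$ for $x\in K$ and $p(x)<\lambda-\epsilon$ for $x\notin K$; it accepts $K$ with bounded positive one-sided error if there is $c>0$ with $p(x)>c$ for $x\in K$ and $p(x)=0$ for $x\notin K$. *)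

From HB Require Import structures.
From mathcomp Require Import all_boot all_order all_algebra complex Rstruct.
Set Implicit Arguments. Unset Strict Implicit. Unset Printing Implicit Defensive.
Import Order.TTheory GRing.Theory Num.Theory.
Local Open Scope ring_scope.

Notation Real := Rdefinitions.R.
Notation Cplx := (Rdefinitions.R[i]).

Definition sqmod (z : Cplx) : Real := (complex.Re z) ^+ 2 + (complex.Im z) ^+ 2.

Definition adjmx n (A : 'M[Cplx]_n) : 'M[Cplx]_n := (map_mx (@conjc _) A)^T.

Definition unitary n (A : 'M[Cplx]_n) : Prop := A *m adjmx A = 1%:M.

Definition proj n (A : {set 'I_n}) (v : 'cV[Cplx]_n) : 'cV[Cplx]_n :=
  \col_i (if i \in A then v i 0 else 0).

Definition sqnorm n (v : 'cV[Cplx]_n) : Real := \sum_i sqmod (v i 0).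

(* MM-QFA over the alphabet Sigma. States Q = 'I_n; the end-marker $ is
   represented by None : option Sigma, a letter s by Some s. *)
Record MMQFA (Sigma : finType) := {
  nst : nat;
  U : option Sigma -> 'M[Cplx]_nst;
  U_unitary : forall a, unitary (U a);
  q0 : 'I_nst;
  Qacc : {set 'I_nst};
  Qrej : {set 'I_nst};
  Qacc_rej_disj : [disjoint Qacc & Qrej]
}.

Section Run.
Variables (Sigma : finType) (M : MMQFA Sigma).
Local Notation n := (nst M).

Definition Qnon : {set 'I_n} := ~: (Qacc M :|: Qrej M).

Definition init_vec : 'cV[Cplx]_n := \col_i (if i == q0 M then 1 else 0).

(* configuration (psi, p_acc, p_rej) *)
Definition step (c : 'cV[Cplx]_n * Real * Real) (a : option Sigma) :=
  let: (psi, pa, pr) := c in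
  let psi' := U M a *m psi in
  (proj Qnon psi', pa + sqnorm (proj (Qacc M) psi'), pr + sqnorm (proj (Qrej M) psi')).

Definition init_conf : 'cV[Cplx]_n * Real * Real := (init_vec, 0, 0).

Definition run (w : seq (option Sigma)) := foldl step init_conf w.

Definition acc_prob (x : seq Sigma) : Real :=
  (run (map Some x ++ [:: None])).1.2.

Definition end_decisive : Prop :=
  forall (w : seq Sigma) (s : Sigma),
    proj (Qacc M) (U M (Some s) *m (run (map Some w)).1.1) = 0.

Definition accepts_bounded_error (K : seq Sigma -> Prop) : Prop :=
  exists (lam eps : Real), 0 < eps /\
    forall x, (K x -> lam + eps < acc_prob x) /\ (~ K x -> acc_prob x < lam - eps).

Definition accepts_bounded_pos_one_sided (K : seq Sigma -> Prop) : Prop :=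
  exists c : Real, 0 < c /\
    forall x, (K x -> c < acc_prob x) /\ (~ K x -> acc_prob x = 0).
End Run.

From HB Require Import structures.
From mathcomp Require Import all_boot all_order all_algebra complex Rstruct.
From mathcomp Require Import mxtens ring lra.
Set Implicit Arguments. Unset Strict Implicit. Unset Printing Implicit Defensive.
Import Order.TTheory GRing.Theory Num.Theory.
Local Open Scope ring_scope.

(* Since only the end-marker can lead to acceptance in an end-decisive automaton,
   p(x) = |P_acc U_$ psi_x|^2, where psi_x is the unnormalised non-halting state
   after reading x.  In the tensor product of two automata, which keeps running
   while both factors do and accepts when both accept, psi_x is the tensor product
   of the two non-halting states, so acceptance probabilities multiply.  Running
   N+1 copies of M next to M' thus accepts with probability p_M(x)^(N+1) p_M'(x):
   above (lam+eps)^(N+1) c on L /\ L', zero off L', and below (lam-eps)^(N+1) on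
   L' minus L; for N large the first bound exceeds the last.  When lam - eps <= 0,
   L contains every word and M' alone does the job. *)

Lemma sqmod_ge0 (z : Cplx) : 0 <= sqmod z.
Proof. by rewrite /sqmod addr_ge0 ?sqr_ge0. Qed.

Lemma sqmod0 : sqmod 0 = 0.
Proof. by rewrite /sqmod /= expr0n addr0. Qed.

Lemma sqmodM (z w : Cplx) : sqmod (z * w) = sqmod z * sqmod w.
Proof. by case: z => a b; case: w => c d; rewrite /sqmod /=; ring. Qed.

Lemma sqmodE (z : Cplx) : sqmod z = complex.Re (conjc z * z).
Proof. by case: z => a b; rewrite /sqmod /=; ring. Qed.

Section SquaredNorm.
Variable n : nat.
Implicit Types (v : 'cV[Cplx]_n) (A : 'M[Cplx]_n).

Lemma sqnorm_ge0 v : 0 <= sqnorm v.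
Proof. by apply: sumr_ge0 => i _; apply: sqmod_ge0. Qed.

Lemma sqnorm0 : sqnorm (0 : 'cV[Cplx]_n) = 0.
Proof. by rewrite /sqnorm big1 // => i _; rewrite mxE sqmod0. Qed.

Lemma sqnorm_proj (S : {set 'I_n}) v : sqnorm (proj S v) <= sqnorm v.
Proof.
apply: ler_sum => i _; rewrite mxE.
by case: (i \in S); rewrite ?sqmod0 ?sqmod_ge0.
Qed.

Lemma sqnorm_dot v : sqnorm v = complex.Re (((map_mx conjc v)^T *m v) 0 0).
Proof.
rewrite /sqnorm mxE raddf_sum; apply: eq_bigr => i _.
by rewrite !mxE sqmodE.
Qed.

Lemma sqnorm_unitary A v : unitary A -> sqnorm (A *m v) = sqnorm v.
Proof.
move=> /mulmx1C adjAA.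
by rewrite !sqnorm_dot map_mxM trmx_mul mulmxA -(mulmxA _ _ A) -/(adjmx A) adjAA mulmx1.
Qed.

End SquaredNorm.

Lemma mxtens_index_eq m n (i i' : 'I_m) (j j' : 'I_n) :
  (mxtens_index (i, j) == mxtens_index (i', j')) = (i == i') && (j == j').
Proof. by rewrite (can_eq (@mxtens_indexK m n)) xpair_eqE. Qed.

Lemma tens1mx (R : pzRingType) m n : (1%:M : 'M[R]_m) *t (1%:M : 'M[R]_n) = 1%:M.
Proof.
apply/matrixP => k l.
case: (mxtens_indexP k) => i j; case: (mxtens_indexP l) => i' j'.
by rewrite tensmxE !mxE mxtens_index_eq -natrM mulnb.
Qed.

Lemma tens_colE (R : pzRingType) m n (v : 'cV[R]_m) (w : 'cV[R]_n) i j :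
  (v *t w) (mxtens_index (i, j)) 0 = v i 0 * w j 0.
Proof.
by rewrite mxE mxtens_indexK [(mxtens_unindex _).1]ord1 [(mxtens_unindex _).2]ord1.
Qed.

Lemma tensmx_mulv (R : comPzRingType) m n p q (A : 'M[R]_(m, n)) (B : 'M[R]_(p, q))
    (v : 'cV[R]_n) (w : 'cV[R]_q) :
  (A *t B) *m (v *t w : 'cV_(n * q)) = (A *m v) *t (B *m w) :> 'cV[R]_(m * p).
Proof. exact: (tensmx_mul A B v w). Qed.

Section TensorProduct.
Variables m n : nat.

Definition mxtens_set (A : {set 'I_m}) (B : {set 'I_n}) : {set 'I_(m * n)} :=
  [set k | ((mxtens_unindex k).1 \in A) && ((mxtens_unindex k).2 \in B)].

Lemma mem_mxtens_set A B i j :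
  (mxtens_index (i, j) \in mxtens_set A B) = (i \in A) && (j \in B).
Proof. by rewrite inE mxtens_indexK. Qed.

Lemma adjmx_tens (A : 'M[Cplx]_m) (B : 'M[Cplx]_n) :
  adjmx (A *t B) = adjmx A *t adjmx B.
Proof. by rewrite /adjmx map_mxT trmx_tens. Qed.

Lemma unitary_tens (A : 'M[Cplx]_m) (B : 'M[Cplx]_n) :
  unitary A -> unitary B -> unitary (A *t B).
Proof. by rewrite /unitary adjmx_tens tensmx_mul => -> ->; rewrite tens1mx. Qed.

Lemma proj_tens A B (v : 'cV[Cplx]_m) (w : 'cV[Cplx]_n) :
  proj (mxtens_set A B) (v *t w) = proj A v *t proj B w.
Proof.
apply/colP => k; case: (mxtens_indexP k) => i j.
rewrite mxE mem_mxtens_set !tens_colE !mxE.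
by case: (i \in A); case: (j \in B); rewrite ?mulr0 ?mul0r.
Qed.

Lemma sqnorm_tens (v : 'cV[Cplx]_m) (w : 'cV[Cplx]_n) :
  sqnorm (v *t w) = sqnorm v * sqnorm w.
Proof.
rewrite /sqnorm mulr_sum; apply: eq_bigr => k _.
by case: (mxtens_indexP k) => i j; rewrite tens_colE sqmodM mxtens_indexK.
Qed.

End TensorProduct.

Section Run.
Variables (Sigma : finType) (M : MMQFA Sigma).

Lemma run_rcons ws a : run M (rcons ws a) = step (run M ws) a.
Proof. by rewrite /run foldl_rcons. Qed.

Lemma run_acc_ge0 ws : 0 <= (run M ws).1.2.
Proof.
elim/last_ind: ws => [|ws a IH] //; rewrite run_rcons.
by case: (run M ws) IH => [[psi pa] pr] /= pa_ge0; rewrite addr_ge0 ?sqnorm_ge0.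
Qed.

Lemma acc_prob_ge0 x : 0 <= acc_prob M x.
Proof. exact: run_acc_ge0. Qed.

Definition state (w : seq Sigma) : 'cV[Cplx]_(nst M) := (run M (map Some w)).1.1.

Lemma state_rcons w s : state (rcons w s) = proj (Qnon M) (U M (Some s) *m state w).
Proof. by rewrite /state map_rcons run_rcons; case: (run M _) => [[]]. Qed.

Lemma sqnorm_init_vec : sqnorm (init_vec M) = 1.
Proof.
rewrite /sqnorm (bigD1 (q0 M)) //= big1 => [|i /negbTE q0Fi]; rewrite mxE.
  by rewrite eqxx /sqmod /= expr1n expr0n !addr0.
by rewrite q0Fi sqmod0.
Qed.

Lemma sqnorm_state_le1 w : sqnorm (state w) <= 1.
Proof.
elim/last_ind: w => [|w s IH]; first by rewrite sqnorm_init_vec.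
rewrite state_rcons (le_trans (sqnorm_proj _ _)) //.
by rewrite sqnorm_unitary //; apply: U_unitary.
Qed.

Section EndDecisive.
Hypothesis M_ed : end_decisive M.

Lemma run_acc_eq0 w : (run M (map Some w)).1.2 = 0.
Proof.
elim/last_ind: w => [|w s IH] //; have := M_ed w s.
rewrite map_rcons run_rcons; case: (run M _) IH => [[psi pa] pr] /= -> ->.
by rewrite sqnorm0 addr0.
Qed.

Lemma acc_prob_end_decisive x :
  acc_prob M x = sqnorm (proj (Qacc M) (U M None *m state x)).
Proof.
have := run_acc_eq0 x; rewrite /acc_prob /state /run foldl_cat /=.
by case: (foldl _ _ _) => [[psi pa] pr] /= ->; rewrite add0r.
Qed.

Lemma acc_prob_le1 x : acc_prob M x <= 1.
Proof.
rewrite acc_prob_end_decisive (le_trans (sqnorm_proj _ _)) //.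
by rewrite sqnorm_unitary ?sqnorm_state_le1 //; apply: U_unitary.
Qed.

End EndDecisive.
End Run.

Section TensorAutomaton.
Variables (Sigma : finType) (M1 M2 : MMQFA Sigma).

Definition tens_Qacc := mxtens_set (Qacc M1) (Qacc M2).

Definition tens_Qrej := ~: (mxtens_set (Qnon M1) (Qnon M2) :|: tens_Qacc).

Lemma tens_Qacc_rej_disj : [disjoint tens_Qacc & tens_Qrej].
Proof. by rewrite -setI_eq0 /tens_Qrej setCU setICA setICr setI0. Qed.

Definition tensMMQFA : MMQFA Sigma := {|
  nst := nst M1 * nst M2;
  U a := U M1 a *t U M2 a;
  U_unitary a := unitary_tens (U_unitary M1 a) (U_unitary M2 a);
  q0 := mxtens_index (q0 M1, q0 M2);
  Qacc := tens_Qacc;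
  Qrej := tens_Qrej;
  Qacc_rej_disj := tens_Qacc_rej_disj |}.

Lemma Qnon_tens : Qnon tensMMQFA = mxtens_set (Qnon M1) (Qnon M2).
Proof.
apply/setP => k; case: (mxtens_indexP k) => i j.
rewrite /Qnon /= /tens_Qrej /tens_Qacc !inE mxtens_indexK /=.
by case: (i \in Qacc M1); case: (i \in Qrej M1);
   case: (j \in Qacc M2); case: (j \in Qrej M2).
Qed.

Lemma init_vec_tens : init_vec tensMMQFA = init_vec M1 *t init_vec M2.
Proof.
apply/colP => k; case: (mxtens_indexP k) => i j.
by rewrite tens_colE !mxE mxtens_index_eq; case: eqP; case: eqP; rewrite ?mulr1 ?mulr0.
Qed.

Lemma state_tens w : state tensMMQFA w = state M1 w *t state M2 w.
Proof.
elim/last_ind: w => [|w s IH]; first exact: init_vec_tens.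
by rewrite !state_rcons IH Qnon_tens /= tensmx_mulv proj_tens.
Qed.

Lemma end_decisive_tens : end_decisive M1 -> end_decisive tensMMQFA.
Proof.
move=> M1_ed w s; rewrite -[(run _ _).1.1]/(state _ w) state_tens /= tensmx_mulv.
by rewrite proj_tens M1_ed tens0mx.
Qed.

Lemma acc_prob_tens x : end_decisive M1 -> end_decisive M2 ->
  acc_prob tensMMQFA x = acc_prob M1 x * acc_prob M2 x.
Proof.
move=> M1_ed M2_ed; rewrite !acc_prob_end_decisive //; last exact: end_decisive_tens.
by rewrite state_tens /= tensmx_mulv proj_tens sqnorm_tens.
Qed.

End TensorAutomaton.

Fixpoint tens_pow (Sigma : finType) (M : MMQFA Sigma) (k : nat) : MMQFA Sigma :=
  if k is k'.+1 then tensMMQFA (tens_pow M k') M else M.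

Lemma end_decisive_tens_pow (Sigma : finType) (M : MMQFA Sigma) k :
  end_decisive M -> end_decisive (tens_pow M k).
Proof. by move=> M_ed; elim: k => //= k; apply: end_decisive_tens. Qed.

Lemma acc_prob_tens_pow (Sigma : finType) (M : MMQFA Sigma) k x :
  end_decisive M -> acc_prob (tens_pow M k) x = acc_prob M x ^+ k.+1.
Proof.
move=> M_ed; elim: k => [|k IH] /=; first by rewrite expr1.
by rewrite acc_prob_tens ?IH ?exprSr //; apply: end_decisive_tens_pow.
Qed.

Lemma bernoulli_ineq (R : realDomainType) (d : R) n :
  0 <= d -> 1 + n%:R * d <= (1 + d) ^+ n.
Proof.
move=> d_ge0; elim: n => [|n IH]; first by rewrite mul0r addr0.
rewrite exprSr (le_trans _ (ler_wpM2r _ IH)) ?addr_ge0 //.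
have := ler0n R n; rewrite -addn1 natrD; nra.
Qed.

Lemma exists_exprS_gap (R : archiRealFieldType) (a b c : R) :
  0 < a -> a < b -> 0 < c -> exists N, a ^+ N.+1 < b ^+ N.+1 * c.
Proof.
move=> a_gt0 a_lt_b c_gt0; pose d := b / a - 1.
have d_gt0 : 0 < d by rewrite subr_gt0 ltr_pdivlMr // mul1r.
have b_eq : b = a * (1 + d) by rewrite /d addrC subrK mulrCA divff ?mulr1 ?gt_eqF.
pose N := Num.Def.archi_bound ((d * c)^-1).
have N_large : 1 < N%:R * (d * c).
  rewrite -ltr_pdivrMr ?mulr_gt0 // div1r.
  by apply/archi_boundP/ltW; rewrite invr_gt0 mulr_gt0.
exists N; rewrite b_eq exprMn -mulrA ltr_pMr ?exprn_gt0 //.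
have := ler_wpM2r (ltW c_gt0) (bernoulli_ineq N.+1 (ltW d_gt0)).
rewrite -addn1 natrD; nra.
Qed.

Lemma accepts_bounded_error_of_pos_one_sided (Sigma : finType) (M : MMQFA Sigma)
    (K : seq Sigma -> Prop) :
  accepts_bounded_pos_one_sided M K -> accepts_bounded_error M K.
Proof.
move=> [c [c_gt0 MK]]; exists (c / 2), (c / 4); split=> [|x]; first lra.
by have [inK notinK] := MK x; split=> [/inK | /notinK ->]; lra.
Qed.

Section Intersection.
Variables (Sigma : finType) (M M' : MMQFA Sigma) (L L' : seq Sigma -> Prop).
Variables (lam eps c : Real).
Hypotheses (M_ed : end_decisive M) (M'_ed : end_decisive M').
Hypothesis ML : forall x,
  (L x -> lam + eps < acc_prob M x) /\ (~ L x -> acc_prob M x < lam - eps).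
Hypothesis M'L' : forall x, (L' x -> c < acc_prob M' x) /\ (~ L' x -> acc_prob M' x = 0).
Hypothesis c_gt0 : 0 < c.

Lemma accepts_pos_one_sided_inter : lam - eps <= 0 ->
  accepts_bounded_pos_one_sided M' (fun x => L x /\ L' x).
Proof.
move=> a_le0; exists c; split=> // x; split=> [[_ /(M'L' x).1] // | notLL'].
apply: (M'L' x).2 => L'x; have notL : ~ L x by move=> Lx; apply: notLL'.
by have := (ML x).2 notL; have := acc_prob_ge0 M x; lra.
Qed.

Lemma accepts_bounded_error_inter_tens_pow N :
  0 < lam - eps -> lam - eps < lam + eps ->
  (lam - eps) ^+ N.+1 < (lam + eps) ^+ N.+1 * c ->
  accepts_bounded_error (tensMMQFA (tens_pow M N) M') (fun x => L x /\ L' x).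
Proof.
move=> a_gt0 a_lt_b; set A := (lam - eps) ^+ N.+1; set B := _ * c => gap.
have A_gt0 : 0 < A by rewrite exprn_gt0.
have b_gt0 := lt_trans a_gt0 a_lt_b.
exists ((A + B) / 2), ((B - A) / 2); split=> [|x]; first lra.
rewrite acc_prob_tens ?acc_prob_tens_pow //; last exact: end_decisive_tens_pow.
have pM_ge0 := acc_prob_ge0 M x; have pM'_ge0 := acc_prob_ge0 M' x.
split=> [[Lx L'x] | notLL'].
  have := (ML x).1 Lx; have := (M'L' x).1 L'x => pM'_gt pM_gt.
  suff : B < acc_prob M x ^+ N.+1 * acc_prob M' x by lra.
  by rewrite ltr_pM ?exprn_ge0 ?ltrXn2r ?(ltW b_gt0) ?(ltW c_gt0).
have [-> | pM'_neq0] := eqVneq (acc_prob M' x) 0; first by rewrite mulr0; lra.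
have notnotL' : ~ ~ L' x by move=> /(M'L' x).2 /eqP; rewrite (negbTE pM'_neq0).
have notL : ~ L x by move=> Lx; apply: notnotL' => L'x; apply: notLL'.
have : acc_prob M x ^+ N.+1 < A by rewrite ltrXn2r // (ML x).2.
have := ler_piMr (exprn_ge0 N.+1 pM_ge0) (acc_prob_le1 M'_ed x); lra.
Qed.

End Intersection.

Theorem lemma4p14 (Sigma : finType) (M M' : MMQFA Sigma)
  (L L' : seq Sigma -> Prop) :
  end_decisive M -> accepts_bounded_error M L ->
  end_decisive M' -> accepts_bounded_pos_one_sided M' L' ->
  exists M'' : MMQFA Sigma,
    accepts_bounded_error M'' (fun x => L x /\ L' x).
Proof.
move=> M_ed [lam [eps [eps_gt0 ML]]] M'_ed [c [c_gt0 M'L']].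
have [a_le0 | a_gt0] := lerP (lam - eps) 0.
  exists M'; apply: accepts_bounded_error_of_pos_one_sided.
  exact: accepts_pos_one_sided_inter.
have a_lt_b : lam - eps < lam + eps by lra.
have [N gap] := exists_exprS_gap a_gt0 a_lt_b c_gt0.
exists (tensMMQFA (tens_pow M N) M').
exact: accepts_bounded_error_inter_tens_pow.
Qed.
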